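(* Let $\mathcal{S}_{reb}\subset\mathbb{R}^3$ be the rebit state space. Then $$\sup\,\bar P(\mathsf{M}^{(1)},\mathsf{M}^{(2)})=\frac12\Big(1+\frac{1}{\sqrt2}\Big),$$ where the supremum ranges over all pairs of dichotomic measurements on $\mathcal{S}_{reb}$, and the supremum is attained.
   Context: The rebit state space is $\mathcal{S}_{reb}=\{(x,y,1)^T : x^2+y^2\le1\}$, whose pure states are $s_\theta=(\cos\theta,\sin\theta,1)^T$. Effects are linear functionals $e$ on $\mathbb{R}^3$ with $0\le e\le1$ on $\mathcal{S}_{reb}$; unit effect $u=(0,0,1)$ (acting by dot product); $\|f\|=\max_{s\in\mathcal{S}_{reb}}|f(s)|$. A dichotomic measurement is a pair of effects $\mathsf{M}_+,\mathsf{M}_-$ with $\mathsf{M}_++\mathsf{M}_-=u$, and $\bar P(\mathsf{M}^{(1)},\mathsf{M}^{(2)})=\frac18\sum_{x,y\in\{+,-\}}\|\mathsf{M}^{(1)}_x+\mathsf{M}^{(2)}_y\|$. *)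

From HB Require Import structures.
From mathcomp Require Import all_boot all_order all_algebra.
From mathcomp Require Import all_classical all_reals.
Set Implicit Arguments. Unset Strict Implicit. Unset Printing Implicit Defensive.
Import Order.TTheory GRing.Theory Num.Theory.
Local Open Scope classical_set_scope.
Local Open Scope ring_scope.

Section Rebit.
Variable R : realType.

Definition vec3 := (R * R * R)%type.
Definition mk3 (x y z : R) : vec3 := (x, y, z).
Definition c1 (v : vec3) : R := v.1.1.
Definition c2 (v : vec3) : R := v.1.2.
Definition c3 (v : vec3) : R := v.2.

Definition rebit_states : set vec3 :=
  [set s | c3 s = 1 /\ c1 s ^+ 2 + c2 s ^+ 2 <= 1].

(* a linear functional on R^3, identified with a vector, acting by dot product *)
Definition apply3 (f s : vec3) : R := c1 f * c1 s + c2 f * c2 s + c3 f * c3 s.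
Definition add3 (f g : vec3) : vec3 := mk3 (c1 f + c1 g) (c2 f + c2 g) (c3 f + c3 g).

Definition unit_eff : vec3 := mk3 0 0 1.

Definition is_effect (e : vec3) : Prop :=
  forall s, rebit_states s -> 0 <= apply3 e s <= 1.

(* ||f|| = max_{s in S_reb} |f(s)| (the max exists by compactness; taken as sup) *)
Definition fnorm (f : vec3) : R := sup [set `|apply3 f s| | s in rebit_states].

Definition dichotomic (M : vec3 * vec3) : Prop :=
  is_effect M.1 /\ is_effect M.2 /\ add3 M.1 M.2 = unit_eff.

Definition Pbar (M1 M2 : vec3 * vec3) : R :=
  8^-1 * (fnorm (add3 M1.1 M2.1) + fnorm (add3 M1.1 M2.2)
          + fnorm (add3 M1.2 M2.1) + fnorm (add3 M1.2 M2.2)).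

End Rebit.

(* On a rebit state (x, y, 1) a functional f takes the value
   c3 f + c1 f * x + c2 f * y, so over the unit disc it ranges exactly over
   [c3 f - r, c3 f + r], where r = norm2 f is the length of its planar part.
   Hence e is an effect iff r <= c3 e <= 1 - r, and ||f|| = |c3 f| + r.
   For dichotomic measurements (e1, u - e1) and (e2, u - e2) the four sums have
   nonnegative constant parts adding up to 4, so
   Pbar = 1/2 + (|v1 + v2| + |v1 - v2|) / 4 with |v1|, |v2| <= 1/2 the planar
   parts of e1, e2.  The parallelogram law bounds the bracket by sqrt 2, with
   equality for orthogonal v1, v2 of length 1/2. *)

From HB Require Import structures.
From mathcomp Require Import all_boot all_order all_algebra.
From mathcomp Require Import all_classical all_reals.
From mathcomp Require Import ring lra.
Import Order.TTheory GRing.Theory Num.Theory.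
Local Open Scope classical_set_scope.
Local Open Scope ring_scope.

Lemma sup_eq_max {R : realType} (E : set R) x : E x -> ubound E x -> sup E = x.
Proof.
move=> Ex ubx; apply/le_anti/andP; split; first by apply: ge_sup => //; exists x.
by apply: sup_upper_bound => //; split; [exists x | exists x].
Qed.

Lemma cauchy_schwarz2 {R : realDomainType} (a b x y : R) :
  (a * x + b * y) ^+ 2 <= (a ^+ 2 + b ^+ 2) * (x ^+ 2 + y ^+ 2).
Proof. have := sqr_ge0 (a * y - b * x); nra. Qed.

Lemma ler_add_sqrt {R : rcfType} (p q : R) : 0 <= p -> 0 <= q ->
  p + q <= Num.sqrt (2 * (p ^+ 2 + q ^+ 2)).
Proof.
move=> p0 q0; rewrite -[p + q]ger0_norm ?addr_ge0 // -sqrtr_sqr.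
by rewrite ler_sqrt ?mulr_ge0 ?addr_ge0 ?sqr_ge0 //; have := sqr_ge0 (p - q); nra.
Qed.

Lemma half_one_add_inv_sqrt2 {R : rcfType} :
  2^-1 * (1 + (Num.sqrt 2)^-1) = 2^-1 + 4^-1 * Num.sqrt (2 : R).
Proof.
have s0 : 0 < Num.sqrt (2 : R) by rewrite sqrtr_gt0 ltr0n.
have s2 : Num.sqrt (2 : R) ^+ 2 = 2 by rewrite sqr_sqrtr ?ler0n.
have sV : (Num.sqrt 2)^-1 = Num.sqrt (2 : R) / 2.
  by apply: (mulfI (lt0r_neq0 s0)); rewrite mulfV ?lt0r_neq0 // mulrA -expr2 s2 mulfV ?pnatr_eq0.
by rewrite sV; field.
Qed.

Section Rebit.
Variable R : realType.
Implicit Types (f e s : vec3 R) (M : vec3 R * vec3 R).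

Definition dot2 f s : R := c1 f * c1 s + c2 f * c2 s.
Definition norm2 f : R := Num.sqrt (c1 f ^+ 2 + c2 f ^+ 2).

Lemma norm2_ge0 f : 0 <= norm2 f.
Proof. exact: sqrtr_ge0. Qed.

Lemma sqr_norm2 f : norm2 f ^+ 2 = c1 f ^+ 2 + c2 f ^+ 2.
Proof. by rewrite sqr_sqrtr // addr_ge0 ?sqr_ge0. Qed.

Lemma apply3_state f s : rebit_states s -> apply3 f s = c3 f + dot2 f s.
Proof. by case=> s3 _; rewrite /apply3 /dot2 s3 mulr1 addrC. Qed.

Lemma norm_dot2_le f s : rebit_states s -> `|dot2 f s| <= norm2 f.
Proof.
case=> _ s12; rewrite -sqrtr_sqr ler_sqrt ?addr_ge0 ?sqr_ge0 //.
rewrite /dot2; apply: le_trans (cauchy_schwarz2 _ _ _ _) _.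
by rewrite ler_piMr ?addr_ge0 ?sqr_ge0.
Qed.

Lemma dot2_attained f t : `|t| <= 1 ->
  exists2 s, rebit_states s & dot2 f s = t * norm2 f.
Proof.
move=> t1; have [r0|rn0] := eqVneq (norm2 f) 0.
  exists (mk3 0 0 1); last by rewrite r0 mulr0 /dot2 /c1 /c2 /mk3 /= !mulr0 addr0.
  by split=> //; rewrite /c1 /c2 /= expr0n addr0 ler01.
exists (mk3 (t * c1 f / norm2 f) (t * c2 f / norm2 f) 1).
  split=> //; rewrite /c1 /c2 /= !expr_div_n !exprMn -mulrDl -mulrDr -sqr_norm2.
  by rewrite mulfK ?expf_neq0 // -real_normK ?num_real // expr_le1.
rewrite /dot2 /c1 /c2 /=.
have -> : c1 f * (t * c1 f / norm2 f) + c2 f * (t * c2 f / norm2 f)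
          = t * (c1 f ^+ 2 + c2 f ^+ 2) / norm2 f by rewrite !expr2; field.
by rewrite -sqr_norm2 expr2 mulrA mulfK.
Qed.

Lemma is_effectP e : is_effect e <-> norm2 e <= c3 e <= 1 - norm2 e.
Proof.
split=> [he | /andP[lo hi] s hs].
  have /(dot2_attained e)[s1 hs1 d1] : `|1 : R| <= 1 by rewrite normr1.
  have /(dot2_attained e)[s2 hs2 d2] : `|-1 : R| <= 1 by rewrite normrN1.
  move: (he s1 hs1) (he s2 hs2); rewrite !apply3_state // d1 d2.
  by move=> /andP[_ ?] /andP[? _]; apply/andP; split; lra.
have := norm_dot2_le e s hs; rewrite apply3_state // ler_norml => /andP[? ?].
by apply/andP; split; lra.
Qed.

Lemma fnormE f : fnorm f = `|c3 f| + norm2 f.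
Proof.
apply: sup_eq_max; last first.
  move=> _ [s hs <-]; rewrite apply3_state //.
  by apply: le_trans (ler_normD _ _) _; rewrite lerD2l norm_dot2_le.
have r0 := norm2_ge0 f.
have [c0 | c0] := leP 0 (c3 f).
  have /(dot2_attained f)[s hs d] : `|1 : R| <= 1 by rewrite normr1.
  by exists s => //; rewrite apply3_state // d mul1r !ger0_norm ?addr_ge0.
have /(dot2_attained f)[s hs d] : `|-1 : R| <= 1 by rewrite normrN1.
exists s => //; rewrite apply3_state // d mulN1r !ltr0_norm ?opprB 1?addrC //.
lra.
Qed.

Lemma norm2_oppE f g : c1 f = - c1 g -> c2 f = - c2 g -> norm2 f = norm2 g.
Proof. by rewrite /norm2 => -> ->; rewrite !sqrrN. Qed.

Lemma effect_norm2_le e : is_effect e -> norm2 e <= 2^-1.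
Proof. by move=> /is_effectP/andP[? ?]; lra. Qed.

Definition compl_eff e : vec3 R := mk3 (- c1 e) (- c2 e) (1 - c3 e).

Lemma compl_effect e : is_effect e -> is_effect (compl_eff e).
Proof.
move=> /is_effectP/andP[? ?]; apply/is_effectP.
rewrite (@norm2_oppE (compl_eff e) e) //; apply/andP; split; rewrite /c3 /=; lra.
Qed.

Lemma dichotomicP M : dichotomic M <-> is_effect M.1 /\ M.2 = compl_eff M.1.
Proof.
case: M => e [[a b] z] /=; split=> [[he [_]] | [he ->]].
  rewrite /add3 /unit_eff /compl_eff /mk3 /c1 /c2 /c3 /= => -[ha hb hz].
  by split=> //; congr (_, _, _); lra.
split=> //; split; first exact: compl_effect.
by rewrite /add3 /unit_eff /compl_eff /mk3 /c1 /c2 /c3 /=; congr (_, _, _); ring.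
Qed.

Lemma parallelogram_norm2 f g :
  norm2 (add3 f g) ^+ 2 + norm2 (add3 f (compl_eff g)) ^+ 2
  = 2 * (norm2 f ^+ 2 + norm2 g ^+ 2).
Proof. by rewrite !sqr_norm2 /add3 /compl_eff /c1 /c2 /=; ring. Qed.

Lemma PbarE e1 e2 : is_effect e1 -> is_effect e2 ->
  Pbar (e1, compl_eff e1) (e2, compl_eff e2)
  = 2^-1 + 4^-1 * (norm2 (add3 e1 e2) + norm2 (add3 e1 (compl_eff e2))).
Proof.
move=> /is_effectP/andP[? ?] /is_effectP/andP[? ?].
have [? ?] := (norm2_ge0 e1, norm2_ge0 e2).
rewrite /Pbar /= !fnormE.
have -> : norm2 (add3 (compl_eff e1) e2) = norm2 (add3 e1 (compl_eff e2)).
  by apply: norm2_oppE; rewrite /add3 /compl_eff /mk3 /c1 /c2 /=; ring.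
have -> : norm2 (add3 (compl_eff e1) (compl_eff e2)) = norm2 (add3 e1 e2).
  by apply: norm2_oppE; rewrite /add3 /compl_eff /mk3 /c1 /c2 /=; ring.
by rewrite !ger0_norm /c3 /=; lra.
Qed.

Lemma Pbar_le M1 M2 : dichotomic M1 -> dichotomic M2 ->
  Pbar M1 M2 <= 2^-1 + 4^-1 * Num.sqrt 2.
Proof.
case: M1 M2 => [e1 _] [e2 _] /dichotomicP[/= he1 ->] /dichotomicP[/= he2 ->].
rewrite PbarE // lerD2l ler_pM2l ?invr_gt0 ?ltr0n //.
apply: le_trans (ler_add_sqrt _ _ (norm2_ge0 _) (norm2_ge0 _)) _.
rewrite parallelogram_norm2 ler_sqrt ?ler0n //.
have := effect_norm2_le _ he1; have := effect_norm2_le _ he2.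
have [? ?] := (norm2_ge0 e1, norm2_ge0 e2); nra.
Qed.

Lemma unbiased_effect (a b : R) : a ^+ 2 + b ^+ 2 <= 4^-1 -> is_effect (mk3 a b 2^-1).
Proof.
move=> ab; have h4 : (4^-1 : R) = 2^-1 ^+ 2 by rewrite expr2; field.
have : norm2 (mk3 a b 2^-1) <= 2^-1.
  rewrite -[X in _ <= X]ger0_norm ?invr_ge0 ?ler0n // -sqrtr_sqr -h4.
  by rewrite ler_sqrt ?invr_ge0 ?ler0n.
by move=> ?; apply/is_effectP/andP; split; rewrite /c3 /=; lra.
Qed.

Lemma Pbar_attained : exists M1 M2, dichotomic M1 /\ dichotomic M2 /\
  Pbar M1 M2 = 2^-1 + 4^-1 * Num.sqrt 2.
Proof.
pose ex : vec3 R := mk3 2^-1 0 2^-1; pose ey : vec3 R := mk3 0 2^-1 2^-1.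
have hx : is_effect ex by apply: unbiased_effect; lra.
have hy : is_effect ey by apply: unbiased_effect; lra.
exists (ex, compl_eff ex), (ey, compl_eff ey).
split; first exact/dichotomicP.
split; first exact/dichotomicP.
rewrite PbarE //; congr (_ + _ * _).
have s2 : (Num.sqrt 2 / 2) ^+ 2 = 2^-1 :> R by rewrite expr_div_n sqr_sqrtr ?ler0n //; field.
have norm2_half f : c1 f ^+ 2 + c2 f ^+ 2 = 2^-1 -> norm2 f = Num.sqrt 2 / 2.
  by rewrite /norm2 => ->; rewrite -[in LHS]s2 sqrtr_sqr ger0_norm ?divr_ge0 ?sqrtr_ge0 ?ler0n.
have [-> ->] : norm2 (add3 ex ey) = Num.sqrt 2 / 2 /\
                norm2 (add3 ex (compl_eff ey)) = Num.sqrt 2 / 2.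
  by split; apply: norm2_half; rewrite /add3 /compl_eff /mk3 /c1 /c2 /=; field.
by field.
Qed.

End Rebit.

Theorem mainTheorem14 (R : realType) :
  sup [set Pbar M1 M2 | M1 in [set M : vec3 R * vec3 R | dichotomic M] &
                        M2 in [set M : vec3 R * vec3 R | dichotomic M]]
    = 2^-1 * (1 + (Num.sqrt (2 : R))^-1)
  /\ exists M1 M2 : vec3 R * vec3 R, dichotomic M1 /\ dichotomic M2 /\
       Pbar M1 M2 = 2^-1 * (1 + (Num.sqrt (2 : R))^-1).
Proof.
rewrite half_one_add_inv_sqrt2.
have [M1 [M2 [d1 [d2 opt]]]] := Pbar_attained R.
split; last by exists M1, M2.
apply: sup_eq_max; first by exists M1 => //; exists M2.
by move=> _ [N1 n1 [N2 n2 <-]]; exact: Pbar_le.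
Qed.
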